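(* For every $n \geq 1$, every $p=(p_1,\ldots,p_n) \in (0,1)^n$ with $p_1 + \cdots + p_n \leq 1$ and every integer $k \geq 0$, $$\Pr\{T_{n,n}(p) > k\} \geq \Pr\{T_{n,n}(v) > k\} \geq \Pr\{T_{n,n}(u) > k\},$$ where $p_0 = 1 - (p_1 + \cdots + p_n)$, $v=(v_1,\ldots,v_n)$ with $v_i = (1-p_0)/n$, and $u=(1/n,\ldots,1/n)$.
   Context: For a vector $q=(q_1,\ldots,q_n)$ of nonnegative reals with $q_1+\cdots+q_n\le 1$, let $q_0 = 1-(q_1+\cdots+q_n)$; coupons are drawn independently, one at each time $1,2,\ldots$, from $\{0,1,\ldots,n\}$, coupon $i$ with probability $q_i$, and coupon $0$ never belongs to the collection. $T_{n,n}(q)$ is the number of draws needed until all $n$ coupons $1,\ldots,n$ have been drawn at least once. *)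

From HB Require Import structures.
From mathcomp Require Import all_boot all_order all_algebra.
Set Implicit Arguments. Unset Strict Implicit. Unset Printing Implicit Defensive.
Import Order.TTheory GRing.Theory Num.Theory.
Local Open Scope ring_scope.

(* Coupons are indexed by 'I_n.+1: ord0 is coupon 0 (never in the collection),
   lift ord0 i is coupon i+1 for i : 'I_n. *)
Definition coupon_prob (R : nzRingType) (n : nat) (q : 'I_n -> R) (j : 'I_n.+1) : R :=
  match unlift ord0 j with
  | None => 1 - \sum_(i < n) q i
  | Some i => q i
  end.

(* Pr{T_{n,n}(q) > k}: probability that after the first k independent draws
   some coupon 1..n has not yet been drawn, i.e. the sum over all outcomes
   (f 0, ..., f (k-1)) of the first k draws in which some coupon i is missing. *)
Definition prob_T_gt (R : nzRingType) (n : nat) (q : 'I_n -> R) (k : nat) : R :=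
  \sum_(f : {ffun 'I_k -> 'I_n.+1} |
          [exists i : 'I_n, [forall t : 'I_k, f t != lift ord0 i]])
     \prod_(t < k) coupon_prob q (f t).

From HB Require Import structures.
From mathcomp Require Import all_boot all_order all_algebra.
From mathcomp Require Import ring lra.
Set Implicit Arguments. Unset Strict Implicit. Unset Printing Implicit Defensive.
Import Order.TTheory GRing.Theory Num.Theory.
Local Open Scope ring_scope.

(* Write w for the weights of the coupons 0..n, coupon 0 being the one that
   is never collected.  Fix a coupon i and another index j, and record only
   which draws fall in {i, j}.  If m draws do, then unless some third coupon is
   already missing, the event {T > k} has conditional mass
   w_i^m + w_j^m - [m = 0] (only w_j^m when j = 0), and x^m + y^m decreases
   when (x, y) is made more even with x + y fixed.  So P(T > k) decreases when
   two coupon weights are pulled together, and when weight moves from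
   coupon 0 to a real coupon.  Pulling all p_i to their mean gives
   P(T(p) > k) >= P(T(v) > k); then raising each v_i to 1/n gives
   P(T(v) > k) >= P(T(u) > k). *)

Lemma sumr_predU (V : zmodType) (T : finType) (A B : pred T) (F : T -> V) :
  \sum_(x | A x || B x) F x =
  \sum_(x | A x) F x + \sum_(x | B x) F x - \sum_(x | A x && B x) F x.
Proof.
rewrite big_mkcond [\sum_(x | A x) _]big_mkcond [\sum_(x | B x) _]big_mkcond.
rewrite [\sum_(x | A x && B x) _]big_mkcond -big_split -sumrB /=.
by apply: eq_bigr => x _; case: (A x); case: (B x); rewrite /= ?addrK ?addr0 ?add0r ?subr0.
Qed.

Lemma exprnD_le_spread (R : realDomainType) (x y a b : R) m :
  0 <= b -> b <= x <= a -> b <= y <= a -> x + y = a + b ->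
  x ^+ m + y ^+ m <= a ^+ m + b ^+ m.
Proof.
move=> b_ge0 /andP[le_bx le_xa] /andP[le_by le_ya] sumE.
suff: y ^+ m - b ^+ m <= a ^+ m - x ^+ m by lra.
rewrite !subrXX; have -> : a - x = y - b by lra.
apply: ler_wpM2l; first lra.
apply: ler_sum => l _; apply: ler_pM; rewrite ?exprn_ge0 //; try lra.
all: apply: lerXn2r; rewrite ?nnegrE; lra.
Qed.

Lemma exists_gt_of_sum_eq (R : realDomainType) (T : finType) (q : T -> R) (m : R) (l0 : T) :
  \sum_x q x = \sum_(x : T) m -> q l0 != m -> exists i, m < q i.
Proof.
move=> sumE ql0_neq; case: (boolP [exists i, m < q i]) => [/existsP//|/existsPn q_le].
have le_m l : q l <= m by rewrite leNgt q_le.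
suff : \sum_x q x < \sum_(x : T) m by rewrite sumE ltxx.
rewrite (bigD1 l0) // [X in _ < X](bigD1 l0) //=.
by apply: ltr_leD; [rewrite lt_neqAle ql0_neq le_m | apply: ler_sum].
Qed.

Section MissingMass.
Variables (R : realFieldType) (n k : nat).
Implicit Types (w : 'I_n.+1 -> R) (f g : {ffun 'I_k -> 'I_n.+1}).

Definition some_missing f := [exists l : 'I_n, [forall t, f t != lift ord0 l]].

Definition missing_mass w := \sum_(f | some_missing f) \prod_(t < k) w (f t).

Lemma prob_T_gtE (q : 'I_n -> R) : prob_T_gt q k = missing_mass (coupon_prob q).
Proof. by []. Qed.

Variables (i j : 'I_n.+1).
Hypotheses (neq_ij : i != j) (neq_i0 : i != ord0).

Definition merge (x : 'I_n.+1) := if x == j then i else x.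

Definition merge_ffun f : {ffun 'I_k -> 'I_n.+1} := [ffun t => merge (f t)].

Definition other_missing g :=
  [exists l : 'I_n,
     [&& lift ord0 l != i, lift ord0 l != j & [forall t, g t != lift ord0 l]]].

Lemma some_missing_merge f :
  some_missing f =
  [|| other_missing (merge_ffun f), [forall t, f t != i]
    | (j != ord0) && [forall t, f t != j]].
Proof.
have merge_f t : merge_ffun f t = merge (f t) by rewrite ffunE.
apply/idP/idP.
- case/existsP => l /forallP f_l.
  have [<-|li] := eqVneq (lift ord0 l) i; first by apply/or3P/Or32/forallP.
  have [<-|lj] := eqVneq (lift ord0 l) j.
    by apply/or3P/Or33; rewrite (neq_lift ord0 l); apply/forallP.
  apply/or3P/Or31/existsP; exists l; rewrite li lj /=.
  apply/forallP => t; rewrite merge_f /merge.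
  by case: (f t =P j) => _; [rewrite eq_sym | exact: f_l].
- case/or3P => [/existsP[l /and3P[li lj /forallP g_l]]| f_i | /andP[j0 f_j]].
  + apply/existsP; exists l; apply/forallP => t; apply: contra (g_l t) => /eqP f_t.
    by rewrite merge_f f_t /merge (negbTE lj).
  + by case: (unliftP ord0 i) neq_i0 f_i => [l ->|-> /eqP//] _ f_i; apply/existsP; exists l.
  + by case: (unliftP ord0 j) j0 f_j => [l ->|-> /eqP//] _ f_j; apply/existsP; exists l.
Qed.

Lemma merge_eq_out x y : y != i -> merge x == y -> (x != i) && (x != j).
Proof.
move=> yi; rewrite /merge; case: (x =P j) => [_ /eqP yE|/eqP xj /eqP xy].
  by rewrite -yE eqxx in yi.
by rewrite xy yi.
Qed.

Definition fiber_mass g (Q : pred 'I_n.+1) w :=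
  \sum_(f | (merge_ffun f == g) && [forall t, Q (f t)]) \prod_(t < k) w (f t).

Definition outside_mass g w := \prod_(t | g t != i) \sum_(x | merge x == g t) w x.

Lemma fiber_mass_prod g (Q : pred 'I_n.+1) w :
  fiber_mass g Q w = \prod_(t < k) \sum_(x | (merge x == g t) && Q x) w x.
Proof.
rewrite (bigA_distr_big_dep _ (fun t x => w x)); apply: eq_bigl => f.
apply/andP/familyP => [[/eqP<- /forallP f_Q] t | f_fam].
  by rewrite unfold_in f_Q andbT ffunE.
split; last by apply/forallP => t; have /andP[] := f_fam t.
by apply/eqP/ffunP => t; rewrite ffunE; have /andP[/eqP] := f_fam t.
Qed.

Lemma fiber_massE g (Q : pred 'I_n.+1) w : (forall x, x != i -> x != j -> Q x) ->
  fiber_mass g Q w =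
  ((if Q i then w i else 0) + (if Q j then w j else 0)) ^+ #|[pred t | g t == i]|
  * outside_mass g w.
Proof.
move=> Q_out; rewrite fiber_mass_prod (bigID (fun t => g t == i)) /=; congr (_ * _).
  rewrite (eq_bigr (fun=> \sum_(x | (merge x == i) && Q x) w x)); last by move=> t /eqP ->.
  rewrite prodr_const big_mkcond (bigD1 i) //= (bigD1 j) /=; last by rewrite eq_sym.
  rewrite big1 => [|x /andP[xi xj]]; last by rewrite /merge (negbTE xj) (negbTE xi).
  by rewrite /merge (negbTE neq_ij) !eqxx addr0.
apply: eq_bigr => t g_t; apply: eq_bigl => x.
have [/(merge_eq_out g_t)/andP[xi xj]|] //= := boolP (merge x == g t).
exact: Q_out.
Qed.

(* Mass of {T > k} on the fiber of a merged record with m draws in {i, j},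
   in units of [outside_mass]; [0 ^+ m] removes the doubly counted completion
   avoiding both i and j, which exists only when m = 0; j = ord0 is not a coupon. *)
Definition pair_factor w (m : nat) (others_missing : bool) :=
  if others_missing then (w i + w j) ^+ m
  else w j ^+ m + (if j != ord0 then w i ^+ m - 0 ^+ m else 0).

Lemma missing_fiber_mass g w :
  \sum_(f | some_missing f && (merge_ffun f == g)) \prod_(t < k) w (f t) =
  outside_mass g w * pair_factor w #|[pred t | g t == i]| (other_missing g).
Proof.
rewrite /pair_factor; set m := #|_|; set F := fun f => \prod_(t < k) w (f t).
have on_fiber (P : pred {ffun 'I_k -> 'I_n.+1}) :
    (forall f, merge_ffun f = g -> some_missing f = P f) ->
    \sum_(f | some_missing f && (merge_ffun f == g)) F f =
    \sum_(f | (merge_ffun f == g) && P f) F f.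
  move=> missingE; apply: eq_bigl => f.
  by have [fg|_] := eqVneq (merge_ffun f) g; rewrite ?andbT ?andbF // missingE.
have missing_gE f : merge_ffun f = g -> some_missing f =
    [|| other_missing g, [forall t, f t != i] | (j != ord0) && [forall t, f t != j]].
  by move=> <-; apply: some_missing_merge.
case: ifP => [g_other|g_full].
  rewrite (on_fiber (fun f => [forall t, predT (f t)])) => [|f /missing_gE->];
    last by rewrite g_other; apply/esym/forallP.
  by rewrite -/(fiber_mass _ _ _) (fiber_massE g) // mulrC.
case: ifP => [j0|/negbFE/eqP j0].
  rewrite (on_fiber (fun f => [forall t, predC1 i (f t)] || [forall t, predC1 j (f t)]));
    last by move=> f /missing_gE->; rewrite g_full j0.
  rewrite (eq_bigl _ _ (fun f => andb_orr _ _ _)) sumr_predU.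
  rewrite [X in _ - X](eq_bigl (fun f => (merge_ffun f == g)
                           && [forall t, predI (predC1 i) (predC1 j) (f t)])); last first.
    move=> f; rewrite andbACA andbb; congr (_ && _).
    apply/andP/forallP => [[/forallP f_i /forallP f_j] t|f_ij].
      by apply/andP; split; [exact: f_i | exact: f_j].
    by split; apply/forallP => t; have /andP[] := f_ij t.
  rewrite -!/(fiber_mass _ _ _) !(fiber_massE g); try by move=> x xi xj; rewrite /= ?xi ?xj.
  rewrite /= !eqxx [j == i]eq_sym neq_ij /= -/m !(add0r, addr0).
  by rewrite mulrDr mulrBr ![outside_mass g w * _]mulrC addrA.
rewrite (on_fiber (fun f => [forall t, predC1 i (f t)])); last first.
  by move=> f /missing_gE->; rewrite g_full j0 eqxx andFb orbF.
rewrite -/(fiber_mass _ _ _) (fiber_massE g); last by move=> x xi _; rewrite /= xi.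
by rewrite /= eqxx [j == i]eq_sym neq_ij add0r addr0 mulrC.
Qed.

Lemma eq_outside_mass g w w' : (forall x, x != i -> x != j -> w' x = w x) ->
  outside_mass g w' = outside_mass g w.
Proof.
move=> w'E; apply: eq_bigr => t g_t; apply: eq_bigr => x.
by case/(merge_eq_out g_t)/andP; apply: w'E.
Qed.

Lemma missing_mass_le_of_pair_factor w w' :
  (forall x, x != i -> x != j -> w' x = w x) -> (forall x, 0 <= w x) ->
  (forall m b, pair_factor w' m b <= pair_factor w m b) ->
  missing_mass w' <= missing_mass w.
Proof.
move=> w'E w_ge0 le_factor.
rewrite /missing_mass !(@partition_big _ _ _ _ _ _ some_missing merge_ffun predT) //.
apply: ler_sum => g _.
rewrite !missing_fiber_mass (eq_outside_mass _ w'E); apply: ler_wpM2l => //.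
by apply: prodr_ge0 => t _; apply: sumr_ge0.
Qed.

End MissingMass.

Lemma missing_mass_balance (R : realFieldType) n k (w w' : 'I_n.+1 -> R) (i j : 'I_n.+1) :
  i != j -> i != ord0 -> j != ord0 ->
  (forall x, x != i -> x != j -> w' x = w x) -> (forall x, 0 <= w x) ->
  w' i + w' j = w i + w j -> w j <= w' i <= w i ->
  missing_mass k w' <= missing_mass k w.
Proof.
move=> neq_ij neq_i0 neq_j0 w'E w_ge0 sumE /andP[le_ji le_ii].
apply: (missing_mass_le_of_pair_factor k neq_ij neq_i0) => // m [|].
  by rewrite /pair_factor sumE.
rewrite /pair_factor neq_j0 !addrA lerD2r [w j ^+ m + _]addrC [w' j ^+ m + _]addrC.
by apply: exprnD_le_spread; rewrite ?w_ge0 //; apply/andP; split; lra.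
Qed.

Lemma missing_mass_from_null (R : realFieldType) n k (w w' : 'I_n.+1 -> R) (i : 'I_n.+1) :
  i != ord0 -> (forall x, x != i -> x != ord0 -> w' x = w x) -> (forall x, 0 <= w x) ->
  w' i + w' ord0 = w i + w ord0 -> 0 <= w' ord0 <= w ord0 ->
  missing_mass k w' <= missing_mass k w.
Proof.
move=> neq_i0 w'E w_ge0 sumE /andP[w'0_ge0 le_00].
apply: (missing_mass_le_of_pair_factor k neq_i0 neq_i0) => // m [|].
  by rewrite /pair_factor sumE.
by rewrite /pair_factor eqxx !addr0; apply: lerXn2r; rewrite ?nnegrE.
Qed.

Section CouponWeights.
Variables (R : realFieldType) (n : nat).
Implicit Types (q : 'I_n -> R).

Lemma coupon_prob_lift q l : coupon_prob q (lift ord0 l) = q l.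
Proof. by rewrite /coupon_prob liftK. Qed.

Lemma coupon_prob0 q : coupon_prob q ord0 = 1 - \sum_(l < n) q l.
Proof. by rewrite /coupon_prob unlift_none. Qed.

Lemma coupon_prob_ge0 q : (forall l, 0 <= q l) -> \sum_(l < n) q l <= 1 ->
  forall x, 0 <= coupon_prob q x.
Proof.
move=> q_ge0 sum_le1 x; case: (unliftP ord0 x) => [l ->|->].
  by rewrite coupon_prob_lift.
by rewrite coupon_prob0 subr_ge0.
Qed.

Lemma eq_prob_T_gt q q' k : q =1 q' -> prob_T_gt q k = prob_T_gt q' k.
Proof.
move=> qE; have coupon_probE x : coupon_prob q x = coupon_prob q' x.
  by rewrite /coupon_prob (eq_bigr _ (fun l _ => qE l)); case: unlift.
by apply: eq_bigr => f _; apply: eq_bigr => t _; rewrite coupon_probE.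
Qed.

Definition rebalance q (i j : 'I_n) (c : R) (l : 'I_n) :=
  if l == i then c else if l == j then q i + q j - c else q l.

Lemma sum_rebalance q i j c : i != j ->
  \sum_(l < n) rebalance q i j c l = \sum_(l < n) q l.
Proof.
move=> neq_ij; rewrite (bigD1 i) // [RHS](bigD1 i) //= (bigD1 j) 1?eq_sym //=.
rewrite [X in _ = _ + X](bigD1 j) 1?eq_sym //= !addrA.
rewrite /rebalance eqxx eq_sym (negbTE neq_ij) eqxx; congr (_ + _); first lra.
by apply: eq_bigr => l /andP[/negbTE-> /negbTE->].
Qed.

Lemma card_rebalance_lt q i j c : q i != c -> q j != c ->
  (#|[pred l | rebalance q i j c l != c]| < #|[pred l | q l != c]|)%N.
Proof.
move=> qi_neq qj_neq; apply: proper_card; apply/properP; split.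
  apply/subsetP => l; rewrite !inE /rebalance.
  have [->|_] := eqVneq l i; first by rewrite eqxx.
  by have [->|] := eqVneq l j.
by exists i; rewrite !inE /rebalance ?eqxx.
Qed.

Lemma prob_T_gt_rebalance q i j c k : i != j ->
  (forall l, 0 <= q l) -> \sum_(l < n) q l <= 1 -> q j <= c <= q i ->
  prob_T_gt (rebalance q i j c) k <= prob_T_gt q k.
Proof.
move=> neq_ij q_ge0 sum_le1 c_between.
have eq_lift := inj_eq (@lift_inj _ ord0).
rewrite !prob_T_gtE.
apply: (missing_mass_balance k (i := lift ord0 i) (j := lift ord0 j)).
- by rewrite eq_lift.
- by rewrite eq_sym neq_lift.
- by rewrite eq_sym neq_lift.
- move=> x; case: (unliftP ord0 x) => [l ->|-> _ _].
    by rewrite !eq_lift !coupon_prob_lift /rebalance => /negbTE-> /negbTE->.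
  by rewrite !coupon_prob0 sum_rebalance.
- exact: coupon_prob_ge0.
- by rewrite !coupon_prob_lift /rebalance eqxx eq_sym (negbTE neq_ij) eqxx; lra.
- by rewrite !coupon_prob_lift /rebalance eqxx.
Qed.

Lemma prob_T_gt_raise q q' i k :
  (forall l, l != i -> q' l = q l) -> (forall l, 0 <= q l) -> q i <= q' i ->
  \sum_(l < n) q' l <= 1 -> prob_T_gt q' k <= prob_T_gt q k.
Proof.
move=> q'E q_ge0 le_i sum'_le1.
have sumE : \sum_(l < n) q' l - \sum_(l < n) q l = q' i - q i.
  rewrite (bigD1 i) // [X in _ - X](bigD1 i) //= (eq_bigr _ (fun l li => q'E l li)).
  by rewrite opprD addrACA subrr addr0.
have q'_ge0 l : 0 <= q' l.
  by have [->|/q'E->] := eqVneq l i; [apply: le_trans le_i | ].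
rewrite !prob_T_gtE; apply: (missing_mass_from_null k (i := lift ord0 i)).
- by rewrite eq_sym neq_lift.
- move=> x; case: (unliftP ord0 x) => [l ->|->]; last by rewrite eqxx.
  by rewrite (inj_eq (@lift_inj _ ord0)) !coupon_prob_lift => /q'E.
- apply: coupon_prob_ge0 => //; apply: le_trans sum'_le1.
  by apply: ler_sum => l _; have [->|/q'E->] := eqVneq l i.
- by rewrite !coupon_prob_lift !coupon_prob0; lra.
- by rewrite !coupon_prob0; lra.
Qed.

Lemma prob_T_gt_antitone q q' k :
  (forall l, 0 <= q l <= q' l) -> \sum_(l < n) q' l <= 1 ->
  prob_T_gt q' k <= prob_T_gt q k.
Proof.
move=> q_between sum'_le1.
pose qr r (l : 'I_n) := if (l < r)%N then q' l else q l.
have qr_ge0 r l : 0 <= qr r l.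
  by rewrite /qr; case: ifP; have /andP[] := q_between l => *; lra.
have qr_le r l : qr r l <= q' l.
  by rewrite /qr; case: ifP; have /andP[] := q_between l.
suff qr_le0 r : (r <= n)%N -> prob_T_gt (qr r) k <= prob_T_gt (qr 0%N) k.
  rewrite (@eq_prob_T_gt q' (qr n)) => [|l]; last by rewrite /qr ltn_ord.
  exact: qr_le0.
elim: r => [//|r IHr] lt_rn; apply: le_trans (IHr (ltnW lt_rn)).
apply: (prob_T_gt_raise (i := Ordinal lt_rn)).
- move=> l neq_l; rewrite /qr ltnS leq_eqVlt.
  suff /negbTE-> : nat_of_ord l != r by [].
  by apply: contra neq_l => /eqP l_r; apply/eqP/val_inj.
- exact: qr_ge0.
- by rewrite /qr /= ltnSn ltnn; have /andP[] := q_between (Ordinal lt_rn).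
- by apply: le_trans sum'_le1; apply: ler_sum => l _; apply: qr_le.
Qed.

Lemma prob_T_gt_uniform_le q k : (0 < n)%N -> (forall l, 0 <= q l) ->
  \sum_(l < n) q l <= 1 ->
  prob_T_gt (fun _ : 'I_n => (\sum_(l < n) q l) / n%:R) k <= prob_T_gt q k.
Proof.
move=> n_gt0; set s := \sum_(l < n) q l; set m := s / n%:R => q_ge0 s_le1.
have sum_m : \sum_(l < n) m = s.
  by rewrite sumr_const card_ord -mulr_natr divfK // pnatr_eq0 -lt0n.
suff smooth N q' : (forall l, 0 <= q' l) -> \sum_(l < n) q' l = s ->
    (#|[pred l | q' l != m]| <= N)%N -> prob_T_gt (fun _ : 'I_n => m) k <= prob_T_gt q' k.
  exact: (smooth _ _ q_ge0 erefl (leqnn _)).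
elim: N q' => [|N IHN] q' q'_ge0 sum'E card_le.
  suff q'_const l : m = q' l by rewrite (eq_prob_T_gt _ q'_const).
  apply/eqP; apply: contraTT card_le => neq_l; rewrite -ltnNge.
  by apply/card_gt0P; exists l; rewrite inE eq_sym.
case: (boolP [forall l, q' l == m]) => [/forallP q'_const|/forallPn[l0 l0_neq]].
  by rewrite (eq_prob_T_gt _ (fun l => esym (eqP (q'_const l)))).
have [i lt_m_i] : exists i, m < q' i by apply: exists_gt_of_sum_eq l0_neq; rewrite sum'E.
have [j lt_j_m] : exists j, q' j < m.
  have sumN : \sum_(l < n) - q' l = \sum_(l < n) - m by rewrite !sumrN sum'E sum_m.
  have l0_neqN : - q' l0 != - m by rewrite eqr_opp.
  by have [j] := exists_gt_of_sum_eq sumN l0_neqN; rewrite ltrN2; exists j.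
have neq_ij : i != j by apply: contraTneq lt_j_m => <-; rewrite -leNgt ltW.
apply: le_trans (prob_T_gt_rebalance (c := m) k neq_ij q'_ge0 _ _); last 2 first.
- by rewrite sum'E.
- by rewrite !ltW.
apply: IHN => [l||].
- have := q'_ge0 j; rewrite /rebalance.
  by case: (l == i); case: (l == j) => //; lra.
- by rewrite sum_rebalance.
- rewrite -ltnS; apply: leq_trans card_le; apply: card_rebalance_lt.
  + by rewrite gt_eqF.
  + by rewrite lt_eqF.
Qed.

End CouponWeights.

Theorem theorem4 (R : realFieldType) (n : nat) (p : 'I_n -> R) (k : nat) :
  (0 < n)%N ->
  (forall i, 0 < p i < 1) ->
  \sum_(i < n) p i <= 1 ->
  let p0 := 1 - \sum_(i < n) p i in
  let v := fun _ : 'I_n => (1 - p0) / n%:R in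
  let u := fun _ : 'I_n => 1 / n%:R in
  prob_T_gt p k >= prob_T_gt v k /\ prob_T_gt v k >= prob_T_gt u k.
Proof.
move=> n_gt0 p_bounds sum_le1 p0 v u.
have p_ge0 l : 0 <= p l by have /andP[/ltW] := p_bounds l.
have vE : v =1 fun=> (\sum_(l < n) p l) / n%:R.
  by move=> l; rewrite /v /p0 opprB addrC subrK.
rewrite (eq_prob_T_gt _ vE); split; first exact: prob_T_gt_uniform_le.
have n_pos : 0 < n%:R :> R by rewrite ltr0n.
apply: prob_T_gt_antitone => [l|].
  by rewrite /u divr_ge0 ?sumr_ge0 //= ler_pM2r ?invr_gt0.
by rewrite /u /= sumr_const card_ord -[_ *+ n]mulr_natr divfK // gt_eqF.
Qed.
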